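(* Let $q_1,q_2,\dots$ be probabilities with $\sum_iq_i=1$ and let $\mathcal{M}=\sum_iq_i\mathcal{M}_i$ be the mechanism that runs $\mathcal{M}_i$ with probability $q_i$. Fix data sets $d,d'$ and suppose $T(\mathcal{M}_i(d),\mathcal{M}_i(d'))\ge f_i$ for trade-off functions with $f_1\le f_2\le f_3\le\cdots$ pointwise. Let $f(\alpha)=\inf\{\sum_iq_if_i(\alpha_i):\alpha_i\in[0,1],\ \sum_iq_i\alpha_i=\alpha\}$ and, for an index $t$, $p_t=\sum_{i<t}q_i$. Then for all $\alpha\in[0,1]$, $$T(\mathcal{M}(d),\mathcal{M}(d'))(\alpha)\ge f(\alpha)\ge f_t(\min\{1,\alpha+p_t\}).$$
   Context: For distributions $P,Q$ on a common space, $T(P,Q)(\alpha)=\inf_\phi\{1-\mathbb{E}_Q[\phi]:\mathbb{E}_P[\phi]\le\alpha\}$, infimum over measurable $\phi$ with values in $[0,1]$. A trade-off function is a convex, continuous, non-increasing $f:[0,1]\to[0,1]$ with $f(\alpha)\le1-\alpha$. The mixture mechanism outputs $\mathcal{M}(d)=\sum_iq_i\mathcal{M}_i(d)$ (the index $i$ is not revealed). *)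

From HB Require Import structures.
From mathcomp Require Import all_boot all_order all_algebra.
From mathcomp Require Import all_classical all_reals all_analysis.
Set Implicit Arguments. Unset Strict Implicit. Unset Printing Implicit Defensive.
Import Order.TTheory GRing.Theory Num.Theory numFieldNormedType.Exports.
Local Open Scope classical_set_scope.
Local Open Scope ring_scope.

Definition tradeoff (d : measure_display) (T : measurableType d) (R : realType)
  (P Q : probability T R) (alpha : R) : \bar R :=
  ereal_inf [set (1 - \int[Q]_x (phi x)%:E)%E | phi in
     [set phi : T -> R | [/\ measurable_fun setT phi,
        (forall x, 0 <= phi x <= 1) &
        (\int[P]_x (phi x)%:E <= alpha%:E)%E]]].

Definition is_tradeoff_fun (R : realType) (f : R -> R) : Prop :=
  [/\ (forall x y l : R, 0 <= x <= 1 -> 0 <= y <= 1 -> 0 <= l <= 1 ->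
         f (l * x + (1 - l) * y) <= l * f x + (1 - l) * f y),
      {within `[0, 1], continuous f},
      (forall x y : R, 0 <= x <= 1 -> 0 <= y <= 1 -> x <= y -> f y <= f x),
      (forall x : R, 0 <= x <= 1 -> 0 <= f x <= 1) &
      (forall x : R, 0 <= x <= 1 -> f x <= 1 - x)].

Definition mix_lower (R : realType) (q : nat -> R) (fs : nat -> R -> R) (alpha : R)
  : \bar R :=
  ereal_inf [set (\sum_(i <oo) (q i * fs i (a i))%:E)%E | a in
     [set a : nat -> R | (forall i, 0 <= a i <= 1) /\
        (\sum_(i <oo) (q i * a i)%:E)%E = alpha%:E]].

(* For the first inequality take a test phi of level alpha for the mixture, with levels
   a_i under M_i(d) and powers c_i under M_i(d'). Then sum_i q_i a_i <= alpha and
   1 - c_i >= f_i(a_i), so the type II error sum_i q_i (1 - c_i) dominates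
   sum_i q_i f_i(a_i), which is at least f(alpha) once the a_i are pushed up until their
   average is alpha. For the second, given alpha_i averaging to alpha, replace alpha_i by 1
   for i < t (this raises the average by at most p_t, and f_t(1) = 0) and use f_t <= f_i
   for i >= t; Jensen's inequality for the convex f_t on a long enough initial segment
   then bounds f_t(min(1, alpha + p_t)) by sum_i q_i f_i(alpha_i) up to the tail of sum_i q_i. *)

From HB Require Import structures.
From mathcomp Require Import all_boot all_order all_algebra.
From mathcomp Require Import all_classical all_reals all_analysis.
From mathcomp Require Import ring lra.
From mathcomp Require Import measurable_realfun.
Set Implicit Arguments. Unset Strict Implicit. Unset Printing Implicit Defensive.
Import Order.TTheory GRing.Theory Num.Theory.
Local Open Scope classical_set_scope.
Local Open Scope ring_scope.

Definition convex01 (R : realType) (f : R -> R) : Prop :=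
  forall x y l : R, 0 <= x <= 1 -> 0 <= y <= 1 -> 0 <= l <= 1 ->
    f (l * x + (1 - l) * y) <= l * f x + (1 - l) * f y.

Lemma convex01_jensen (R : realType) (f : R -> R) (w y : nat -> R) (n : nat) (c : R) :
  convex01 f -> (forall i, 0 <= w i) -> (forall i, 0 <= y i <= 1) ->
  0 <= c <= 1 -> \sum_(i < n) w i <= 1 ->
  f ((1 - \sum_(i < n) w i) * c + \sum_(i < n) w i * y i)
    <= (1 - \sum_(i < n) w i) * f c + \sum_(i < n) w i * f (y i).
Proof.
move=> fconv w_ge0 y01; elim: n c => [|n IHn] c c01.
  by rewrite !big_ord0 subr0 !mul1r !addr0.
rewrite !big_ord_recr /=.
set W := \sum_(i < n) w i in IHn *; set Y := \sum_(i < n) w i * y i in IHn *.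
set F := \sum_(i < n) w i * f (y i) in IHn * => Wn_le1.
have W_ge0 : 0 <= W by exact: sumr_ge0.
have wn_ge0 := w_ge0 n; have /andP[c_ge0 c_le1] := c01; have /andP[yn_ge0 yn_le1] := y01 n.
have [W_eq1|W_neq1] := eqVneq W 1.
  have wn0 : w n = 0 by lra.
  by rewrite wn0 !mul0r !addr0; apply: IHn => //; lra.
(* merge c and y n into the point c', which carries the weight 1 - W *)
pose l := (1 - W - w n) / (1 - W).
have l01 : 0 <= l <= 1.
  by rewrite divr_ge0 ?ler_pdivrMr /=; lra.
pose c' := l * c + (1 - l) * y n.
have c'E : (1 - W) * c' = (1 - W - w n) * c + w n * y n.
  by rewrite /c' /l; field; lra.
have c'01 : 0 <= c' <= 1 by have /andP[l_ge0 l_le1] := l01; apply/andP; split; nra.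
have fc'E : (1 - W) * (l * f c + (1 - l) * f (y n))
          = (1 - W - w n) * f c + w n * f (y n).
  by rewrite /l; field; lra.
have fc'_le : (1 - W) * f c' <= (1 - W - w n) * f c + w n * f (y n).
  by rewrite -fc'E ler_wpM2l ?fconv //; lra.
have W_le1 : W <= 1 by lra.
rewrite (_ : _ * c + _ = (1 - W) * c' + Y); last by rewrite c'E; ring.
have := IHn c' c'01 W_le1; lra.
Qed.

Lemma tradeoff_fun_ge0 (R : realType) (f : R -> R) (x : R) :
  is_tradeoff_fun f -> 0 <= x <= 1 -> 0 <= f x.
Proof. by case=> _ _ _ f01 _ /f01 /andP[]. Qed.

Lemma tradeoff_fun1 (R : realType) (f : R -> R) : is_tradeoff_fun f -> f 1 = 0.
Proof.
move=> hf; have [_ _ _ _ f_le] := hf.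
have unit1 : 0 <= (1 : R) <= 1 by rewrite ler01 lexx.
by apply/eqP; rewrite eq_le tradeoff_fun_ge0 // andbT -(subrr 1) f_le.
Qed.

Lemma psum_le_nneseries (R : realType) (u : nat -> R) (n : nat) :
  (forall i, 0 <= u i) -> ((\sum_(i < n) u i)%:E <= \sum_(i <oo) (u i)%:E)%E.
Proof.
move=> u_ge0; rewrite -sumEFin -(big_mkord xpredT (fun i => (u i)%:E)).
by apply: nneseries_lim_ge => i _ _; rewrite lee_fin.
Qed.

Lemma nneseries_psum_gt (R : realType) (u : nat -> R) (x e : R) :
  (forall i, 0 <= u i) -> (\sum_(i <oo) (u i)%:E)%E = x%:E -> 0 < e ->
  exists N, forall n, (N <= n)%N -> x - e < \sum_(i < n) u i.
Proof.
move=> u_ge0 ux e_gt0.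
have psum_incr := @ereal_nondecreasing_series R (fun i => (u i)%:E) xpredT 0
   (fun i _ _ => (u_ge0 i : (0 <= (u i)%:E)%E)).
have : ((x - e)%:E < ereal_sup (range (fun n => \sum_(0 <= i < n | true) (u i)%:E)))%E.
  by rewrite -(cvg_lim _ (ereal_nondecreasing_cvgn psum_incr)) // ux lte_fin gtrBl.
case/ereal_sup_gt => _ [N _ <-] xe_lt.
exists N => n Nn; rewrite -lte_fin -sumEFin -(big_mkord xpredT (fun i => (u i)%:E)).
exact: lt_le_trans xe_lt (psum_incr _ _ Nn).
Qed.

Section shifted_bound.
Variables (R : realType) (q : nat -> R) (fs : nat -> R -> R) (t : nat).
Hypotheses (q_ge0 : forall i, 0 <= q i) (fs_tradeoff : forall i, is_tradeoff_fun (fs i)).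
Hypothesis fs_ge_t : forall i (x : R), (t <= i)%N -> 0 <= x <= 1 -> fs t x <= fs i x.

Lemma tradeoff_shift_le_psum (a : nat -> R) (n : nat) (alpha : R) :
  (forall i, 0 <= a i <= 1) -> (t <= n)%N -> \sum_(i < n) q i <= 1 ->
  \sum_(i < n) q i * a i <= alpha ->
  fs t (Num.min 1 (alpha + \sum_(i < t) q i))
    <= \sum_(i < n) q i * fs i (a i) + (1 - \sum_(i < n) q i).
Proof.
move=> a01 tn q_psum_le1 qa_le.
have [ft_conv _ ft_noninc ft01 _] := fs_tradeoff t.
pose y i := if (i < t)%N then 1 else a i.
have y01 i : 0 <= y i <= 1 by rewrite /y; case: ifP; rewrite ?ler01 ?lexx.
have unit0 : 0 <= (0 : R) <= 1 by rewrite lexx ler01.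
have := convex01_jensen ft_conv q_ge0 y01 unit0 q_psum_le1.
rewrite mulr0 add0r; set X := \sum_(i < n) q i * y i => jensen.
have X_ge0 : 0 <= X.
  by apply: sumr_ge0 => i _; rewrite mulr_ge0 //; case/andP: (y01 i).
have X_le1 : X <= 1.
  apply: le_trans q_psum_le1; apply: ler_sum => i _.
  by rewrite ler_piMr //; case/andP: (y01 i).
have X_le : X <= alpha + \sum_(i < t) q i.
  apply: (@le_trans _ _ (\sum_(i < n) (q i * a i + (if (i < t)%N then q i else 0)))).
    apply: ler_sum => i _; rewrite /y; case: ifP => _; last by rewrite addr0.
    by rewrite mulr1 lerDr mulr_ge0 //; case/andP: (a01 i).
  by rewrite big_split /= lerD // (big_ord_widen _ _ tn) [leRHS]big_mkcond.
have ft_le : \sum_(i < n) q i * fs t (y i) <= \sum_(i < n) q i * fs i (a i).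
  apply: ler_sum => i _; rewrite /y; case: ifP => [_|/negbT].
    by rewrite tradeoff_fun1 // mulr0 mulr_ge0 ?tradeoff_fun_ge0.
  by rewrite -leqNgt => ti; rewrite ler_wpM2l ?fs_ge_t.
have ft0_le : (1 - \sum_(i < n) q i) * fs t 0 <= 1 - \sum_(i < n) q i.
  by rewrite ler_piMr ?subr_ge0 //; case/andP: (ft01 0 unit0).
set m := Num.min 1 _.
have X_le_m : X <= m by rewrite le_min X_le1 X_le.
have m01 : 0 <= m <= 1 by rewrite (le_trans X_ge0 X_le_m) ge_min lexx.
have ft_m_le : fs t m <= fs t X by rewrite ft_noninc // X_ge0 X_le1.
lra.
Qed.

Lemma tradeoff_shift_le_mix_lower (alpha : R) :
  (\sum_(i <oo) (q i)%:E)%E = 1%E ->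
  ((fs t (Num.min 1 (alpha + \sum_(i < t) q i)))%:E <= mix_lower q fs alpha)%E.
Proof.
move=> q_sum1; apply/ereal_infP => _ [a [a01 qa_sum] <-].
have psum_le1 n : \sum_(i < n) q i <= 1.
  by rewrite -lee_fin -q_sum1 psum_le_nneseries.
have qfa_ge0 i : 0 <= q i * fs i (a i) by rewrite mulr_ge0 ?tradeoff_fun_ge0.
apply/lee_addgt0Pr => e e_gt0.
have [N psum_gt] := nneseries_psum_gt q_ge0 q_sum1 e_gt0.
pose n := maxn N t.
have := psum_gt n (leq_maxl N t) => psum_n_gt.
have qa_le : \sum_(i < n) q i * a i <= alpha.
  rewrite -lee_fin -qa_sum psum_le_nneseries // => i.
  by rewrite mulr_ge0 //; case/andP: (a01 i).
have := tradeoff_shift_le_psum a01 (leq_maxr N t) (psum_le1 n) qa_le => bound.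
apply: (@le_trans _ _ ((\sum_(i < n) q i * fs i (a i) + e)%:E)).
  by rewrite lee_fin; lra.
by rewrite EFinD leeD2r // psum_le_nneseries.
Qed.

End shifted_bound.

Lemma nneseries_compl (R : realType) (q u : nat -> R) (U : R) :
  (forall i, 0 <= q i) -> (forall i, 0 <= u i <= 1) ->
  (\sum_(i <oo) (q i)%:E)%E = 1%E -> (\sum_(i <oo) (q i * u i)%:E)%E = U%:E ->
  (\sum_(i <oo) (q i * (1 - u i))%:E)%E = (1 - U)%:E.
Proof.
move=> q_ge0 u01 q_sum1 qu_sum.
have qu_ge0 i : (0 <= (q i * u i)%:E)%E by rewrite lee_fin mulr_ge0 //; case/andP: (u01 i).
have quc_ge0 i : (0 <= (q i * (1 - u i))%:E)%E.
  by rewrite lee_fin mulr_ge0 // subr_ge0; case/andP: (u01 i).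
have : (\sum_(i <oo) ((q i * (1 - u i))%:E + (q i * u i)%:E))%E = 1%E.
  by rewrite -q_sum1; apply: eq_eseriesr => i _; rewrite -EFinD mulrBr mulr1 subrK.
by rewrite nneseriesD // qu_sum EFinB => <-; rewrite addeK.
Qed.

Section mix_lower_relaxed.
Variables (R : realType) (q : nat -> R) (fs : nat -> R -> R).
Hypotheses (q_ge0 : forall i, 0 <= q i) (q_sum1 : (\sum_(i <oo) (q i)%:E)%E = 1%E).
Hypothesis fs_tradeoff : forall i, is_tradeoff_fun (fs i).

(* The constraint [sum_i q_i a_i = alpha] may be relaxed to [<= alpha]: moving every
   [a i] the same fraction [lam] of the way to [1] reaches [alpha] and, the [fs i]
   being non-increasing, does not increase the objective. *)
Lemma mix_lower_le_nneseries (a : nat -> R) (A alpha : R) :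
  (forall i, 0 <= a i <= 1) -> (\sum_(i <oo) (q i * a i)%:E)%E = A%:E ->
  A <= alpha <= 1 ->
  (mix_lower q fs alpha <= \sum_(i <oo) (q i * fs i (a i))%:E)%E.
Proof.
move=> a01 qa_sum /andP[A_le alpha_le1].
(* if [A = 1] then [alpha = 1], and [lam = 0] since [x / 0 = 0] *)
pose lam := (alpha - A) / (1 - A).
have lam01 : 0 <= lam <= 1.
  rewrite /lam; have [->|A_neq1] := eqVneq A 1; first by rewrite subrr invr0 mulr0 lexx ler01.
  have A_lt1 : 0 < 1 - A by rewrite subr_gt0 lt_neqAle A_neq1 (le_trans A_le).
  apply/andP; split; first by apply: divr_ge0; lra.
  by rewrite ler_pdivrMr // mul1r; lra.
have lamE : A + lam * (1 - A) = alpha.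
  have [A1|A_neq1] := eqVneq A 1; first by rewrite A1 subrr mulr0 addr0; lra.
  by rewrite /lam; field; rewrite subr_eq0 eq_sym.
have /andP[lam_ge0 lam_le1] := lam01.
pose b i := a i + lam * (1 - a i).
have b01 i : 0 <= b i <= 1 by have /andP[? ?] := a01 i; rewrite /b; apply/andP; split; nra.
have a_le_b i : a i <= b i by have /andP[? ?] := a01 i; rewrite /b; nra.
have qa_ge0 i : 0 <= q i * a i by have /andP[? ?] := a01 i; rewrite mulr_ge0.
have qac_ge0 i : 0 <= q i * (1 - a i).
  by have /andP[? ?] := a01 i; rewrite mulr_ge0 ?subr_ge0.
have qb_sum : (\sum_(i <oo) (q i * b i)%:E)%E = alpha%:E.
  rewrite (eq_eseriesr (g := fun i => (q i * a i)%:E + lam%:E * (q i * (1 - a i))%:E)%E);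
    last by move=> i _; rewrite -EFinM -EFinD /b; congr (_%:E); ring.
  rewrite nneseriesD => [|i _ _|i _ _]; last 2 first.
  - by rewrite lee_fin.
  - by rewrite -EFinM lee_fin mulr_ge0.
  rewrite nneseriesZl => [|i _]; last by rewrite lee_fin.
  by rewrite qa_sum (nneseries_compl q_ge0 a01 q_sum1 qa_sum) -EFinM -EFinD lamE.
have mix_le_b : (mix_lower q fs alpha <= \sum_(i <oo) (q i * fs i (b i))%:E)%E.
  by apply: ereal_inf_lbound; exists b.
apply: le_trans mix_le_b _.
apply: lee_nneseries => [i _ _|i _]; rewrite lee_fin.
  by rewrite mulr_ge0 // tradeoff_fun_ge0.
have [_ _ fi_noninc _ _] := fs_tradeoff i.
by rewrite ler_wpM2l // fi_noninc.
Qed.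

End mix_lower_relaxed.

Section mixture.
Variables (dT : measure_display) (T : measurableType dT) (R : realType).
Variable q : nat -> R.
Hypothesis q_ge0 : forall i, 0 <= q i.

Lemma integral_mixture (mu : {measure set T -> \bar R})
    (mus : nat -> {measure set T -> \bar R}) (f : T -> \bar R) :
  (forall A, measurable A -> mu A = \sum_(i <oo) ((q i)%:E * mus i A))%E ->
  measurable_fun setT f -> (forall x, 0 <= f x)%E ->
  (\int[mu]_x f x = \sum_(i <oo) ((q i)%:E * \int[mus i]_x f x))%E.
Proof.
move=> mu_mix mf f_ge0.
pose scaled i := mscale (NngNum (q_ge0 i)) (mus i).
rewrite (eq_measure_integral (mseries scaled 0)) => [|A mA _]; last exact: mu_mix.
rewrite ge0_integral_measure_series //; apply: eq_eseriesr => i _.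
by rewrite ge0_integral_mscale.
Qed.

Section test_integral.
Variables (P : probability T R) (phi : T -> R).
Hypotheses (mphi : measurable_fun setT phi) (phi01 : forall x, 0 <= phi x <= 1).

Lemma integral_test_bounds : (0 <= \int[P]_x (phi x)%:E <= 1)%E.
Proof.
have phi_ge0 x : (0 <= (phi x)%:E)%E by rewrite lee_fin; case/andP: (phi01 x).
rewrite integral_ge0 //= -(probability_setT P) -[leRHS]mul1e -integral_cst //.
apply: ge0_le_integral => // [|x _]; first exact/measurable_EFinP.
by rewrite lee_fin; case/andP: (phi01 x).
Qed.

Lemma integral_testE : ((fine (\int[P]_x (phi x)%:E))%:E = \int[P]_x (phi x)%:E)%E.
Proof.
have /andP[I_ge0 I_le1] := integral_test_bounds.
by rewrite fineK // ge0_fin_numE // (le_lt_trans I_le1) ?ltry.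
Qed.

Lemma fine_integral_test_bounds : 0 <= fine (\int[P]_x (phi x)%:E) <= 1.
Proof. by rewrite -!lee_fin integral_testE integral_test_bounds. Qed.

End test_integral.

Lemma fine_integral_mixture (P : probability T R) (Ps : nat -> probability T R) (phi : T -> R) :
  (forall A, measurable A -> P A = \sum_(i <oo) ((q i)%:E * Ps i A))%E ->
  measurable_fun setT phi -> (forall x, 0 <= phi x <= 1) ->
  (\sum_(i <oo) (q i * fine (\int[Ps i]_x (phi x)%:E))%:E
    = (fine (\int[P]_x (phi x)%:E))%:E)%E.
Proof.
move=> P_mix mphi phi01.
rewrite integral_testE // (integral_mixture P_mix).
- by apply: eq_eseriesr => i _; rewrite EFinM integral_testE.
- exact/measurable_EFinP.
- by move=> x; rewrite lee_fin; case/andP: (phi01 x).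
Qed.

End mixture.

Lemma mix_lower_le_tradeoff_mixture (dT : measure_display) (T : measurableType dT)
    (R : realType) (P Q : probability T R) (Ps Qs : nat -> probability T R)
    (q : nat -> R) (fs : nat -> R -> R) (alpha : R) :
  (forall i, 0 <= q i) -> (\sum_(i <oo) (q i)%:E)%E = 1%E ->
  (forall A, measurable A -> P A = \sum_(i <oo) ((q i)%:E * Ps i A))%E ->
  (forall A, measurable A -> Q A = \sum_(i <oo) ((q i)%:E * Qs i A))%E ->
  (forall i, is_tradeoff_fun (fs i)) ->
  (forall i x, 0 <= x <= 1 -> ((fs i x)%:E <= tradeoff (Ps i) (Qs i) x)%E) ->
  alpha <= 1 -> (mix_lower q fs alpha <= tradeoff P Q alpha)%E.
Proof.
move=> q_ge0 q_sum1 P_mix Q_mix fs_tradeoff fs_le alpha_le1.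
apply/ereal_infP => _ [phi [mphi phi01 P_phi] <-].
pose a i := fine (\int[Ps i]_x (phi x)%:E).
pose c i := fine (\int[Qs i]_x (phi x)%:E).
have a01 i : 0 <= a i <= 1 := fine_integral_test_bounds (Ps i) mphi phi01.
have c01 i : 0 <= c i <= 1 := fine_integral_test_bounds (Qs i) mphi phi01.
have P_phi_le : fine (\int[P]_x (phi x)%:E) <= alpha <= 1.
  by rewrite alpha_le1 andbT -lee_fin integral_testE.
apply: le_trans (mix_lower_le_nneseries q_ge0 q_sum1 fs_tradeoff a01
  (fine_integral_mixture q_ge0 P_mix mphi phi01) P_phi_le) _.
rewrite -(integral_testE Q mphi phi01) -EFinB.
rewrite -(nneseries_compl q_ge0 c01 q_sum1 (fine_integral_mixture q_ge0 Q_mix mphi phi01)).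
apply: lee_nneseries => [i _ _|i _]; rewrite lee_fin.
  by rewrite mulr_ge0 // tradeoff_fun_ge0.
rewrite ler_wpM2l // -lee_fin; apply: le_trans (fs_le i _ (a01 i)) _.
apply: ereal_inf_lbound; exists phi; last by rewrite EFinB integral_testE.
by split; rewrite // integral_testE.
Qed.

Theorem lemma2 (dT : measure_display) (T : measurableType dT) (R : realType)
  (D : Type) (M : nat -> D -> probability T R) (Mmix : D -> probability T R)
  (q : nat -> R) (fs : nat -> R -> R) (d d' : D)
  (hq0 : forall i, 0 <= q i)
  (hq1 : (\sum_(i <oo) (q i)%:E)%E = 1%E)
  (hmix : forall (x : D) (A : set T), measurable A ->
            Mmix x A = (\sum_(i <oo) ((q i)%:E * M i x A))%E)
  (hf : forall i, is_tradeoff_fun (fs i))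
  (hT : forall i (alpha : R), 0 <= alpha <= 1 ->
          ((fs i alpha)%:E <= tradeoff (M i d) (M i d') alpha)%E)
  (hmono : forall i j (alpha : R), (i <= j)%N -> 0 <= alpha <= 1 ->
          fs i alpha <= fs j alpha)
  (t : nat) (alpha : R) (halpha : 0 <= alpha <= 1) :
  (mix_lower q fs alpha <= tradeoff (Mmix d) (Mmix d') alpha)%E /\
  ((fs t (Num.min 1 (alpha + \sum_(i < t) q i)))%:E <= mix_lower q fs alpha)%E.
Proof.
have [_ alpha_le1] := andP halpha.
split; first exact: mix_lower_le_tradeoff_mixture hq0 hq1 (hmix d) (hmix d') hf hT alpha_le1.
exact: (tradeoff_shift_le_mix_lower hq0 hf (hmono t) _ hq1).
Qed.
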